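(* Let $G$ be a finite, simple, undirected, connected graph with $n$ vertices and let $\ell$ be an integer with $1\leq \ell\leq n-1$. Then $\beta_\ell^s(G)\geq \ell+1$.
   Context: $d$ is the shortest-path distance; for nonempty $X\subseteq V(G)$, $d(s,X)=\min_{x\in X}d(s,x)$; for $S=\{s_1,\dots,s_k\}$, $\mathcal{D}_S(X)=(d(s_1,X),\dots,d(s_k,X))$. $S\subseteq V(G)$ is an $\ell$-solid-resolving set if $\mathcal{D}_S(X)\neq\mathcal{D}_S(Y)$ for all distinct nonempty $X,Y\subseteq V(G)$ with $|X|\leq\ell$ ($Y$ of arbitrary size). $\beta_\ell^s(G)$, the $\ell$-solid-metric dimension, is the minimum cardinality of an $\ell$-solid-resolving set of $G$. *)

From mathcomp Require Import all_boot.
Set Implicit Arguments. Unset Strict Implicit. Unset Printing Implicit Defensive.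

Definition simple_graph (T : finType) (e : rel T) : Prop :=
  symmetric e /\ irreflexive e.

Definition connected_graph (T : finType) (e : rel T) : Prop :=
  forall x y : T, connect e x y.

Fixpoint ball (T : finType) (e : rel T) (x : T) (k : nat) : {set T} :=
  match k with
  | 0 => [set x]
  | k'.+1 => ball e x k' :|: [set y | [exists z in ball e x k', e z y]]
  end.

(* shortest-path distance: least k with y in ball e x k (searched up to #|T|,
   which suffices in a connected graph) *)
Definition dist (T : finType) (e : rel T) (x y : T) : nat :=
  find (fun k => y \in ball e x k) (iota 0 #|T|).

Definition dist_set (T : finType) (e : rel T) (s : T) (X : {set T}) : nat :=
  \big[minn/#|T|]_(x in X) dist e s x.

Definition solid_resolving (T : finType) (e : rel T) (l : nat) (S : {set T}) : Prop :=
  forall X Y : {set T}, X != set0 -> Y != set0 -> X != Y -> #|X| <= l ->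
    exists2 s, s \in S & dist_set e s X <> dist_set e s Y.

From mathcomp Require Import all_boot all_order zify.
Import Order.TTheory.

Set Implicit Arguments.
Unset Strict Implicit.

(* A landmark s lies at distance 0 from every set containing s, so the
   landmarks of S cannot tell S apart from the whole vertex set.  Hence an
   l-solid-resolving S with |S| <= l is either empty, which resolves nothing,
   or all of V(G), which is too large. *)

Section SolidResolving.

Variables (T : finType) (e : rel T).

Lemma dist_xx (s : T) : dist e s s = 0.
Proof.
have : 0 < #|T| by apply/card_gt0P; exists s.
by rewrite /dist; case: #|T| => [|n] //= _; rewrite inE eqxx.
Qed.

Lemma dist_set_eq0 (s : T) (X : {set T}) : s \in X -> dist_set e s X = 0.
Proof.
move=> sX; apply/eqP; rewrite -leqn0 -(dist_xx s) /dist_set -minEnat.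
(* instantiated at [nat] so that the order [<=] unifies with [leq] *)
exact: (@bigmin_le_cond _ nat).
Qed.

Lemma solid_resolving_neq0 (l : nat) (S : {set T}) :
  0 < l -> 1 < #|T| -> solid_resolving e l S -> S != set0.
Proof.
move=> l_gt0 T_gt1 resS.
have /card_gt0P [v _] : 0 < #|T| by apply: ltnW.
have v_neq0 : [set v] != set0 by apply/set0Pn; exists v; rewrite inE.
have T_neq0 : [set: T] != set0 by apply/set0Pn; exists v; rewrite inE.
have v_neqT : [set v] != [set: T].
  by apply: contraTneq T_gt1 => vT; rewrite -cardsT -vT cards1.
have v_le : #|[set v]| <= l by rewrite cards1.
have [s sS _] := resS _ _ v_neq0 T_neq0 v_neqT v_le.
by apply/set0Pn; exists s.
Qed.

Lemma solid_resolving_small_setT (l : nat) (S : {set T}) :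
  solid_resolving e l S -> S != set0 -> #|S| <= l -> S = [set: T].
Proof.
move=> resS S_neq0 S_le; apply/eqP; apply: contraT => S_neqT.
have [x xS] := set0Pn _ S_neq0.
have T_neq0 : [set: T] != set0 by apply/set0Pn; exists x; rewrite inE.
have [s sS] := resS _ _ S_neq0 T_neq0 S_neqT S_le.
by rewrite !dist_set_eq0 ?inE.
Qed.

End SolidResolving.

Theorem mainTheorem5 (T : finType) (e : rel T) (l : nat) :
  simple_graph e -> connected_graph e ->
  1 <= l <= #|T| - 1 ->
  forall S : {set T}, solid_resolving e l S -> l.+1 <= #|S|.
Proof.
move=> _ _ /andP [l_gt0 l_lt] S resS; rewrite ltnNge; apply/negP => S_le.
have T_gt1 : 1 < #|T| by lia.
have S_neq0 := solid_resolving_neq0 l_gt0 T_gt1 resS.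
move: l_lt; rewrite -cardsT -(solid_resolving_small_setT resS S_neq0 S_le).
lia.
Qed.
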